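(* Let $\mathscr{X},\mathscr{Y},\mathscr{Z}$ be real Banach spaces with duals $\mathscr{X}^*,\mathscr{Y}^*,\mathscr{Z}^*$, let $A:\mathscr{X}\to\mathscr{Y}$, $B:\mathscr{X}\to\mathscr{Z}$ be bounded linear operators with adjoints $A^*,B^*$, let $\mathbf{y}_0\in\mathscr{Y}$ and $\rho>0$. Suppose $\hat{\mathbf{x}}\in\mathscr{X}$ satisfies $$\|\mathbf{y}_0-A\hat{\mathbf{x}}\|_{\mathscr{Y}}+\rho\|B\hat{\mathbf{x}}\|_{\mathscr{Z}}=\inf\{\|\mathbf{y}_0-A\mathbf{x}\|_{\mathscr{Y}}+\rho\|B\mathbf{x}\|_{\mathscr{Z}}:\mathbf{x}\in\mathscr{X}\}>0,$$ and $(\hat\lambda,\hat\mu)\in\mathscr{Y}^*\times\mathscr{Z}^*$ satisfies $\max\{\|\hat\lambda\|_{\mathscr{Y}^*},\|\hat\mu\|_{\mathscr{Z}^*}\}=1$, $A^*\hat\lambda+\rho B^*\hat\mu=0$ and $$\langle\mathbf{y}_0,\hat\lambda\rangle_{\mathscr{Y}}=\sup\{|\langle\mathbf{y}_0,\lambda\rangle_{\mathscr{Y}}|:\ \max\{\|\lambda\|_{\mathscr{Y}^*},\|\mu\|_{\mathscr{Z}^*}\}\le1,\ A^*\lambda+\rho B^*\mu=0\}>0.$$ Then: 1. If $\|\hat\lambda\|_{\mathscr{Y}^*}>\|\hat\mu\|_{\mathscr{Z}^*}$, then $B\hat{\mathbf{x}}=0$ and $\|\mathbf{y}_0-A\hat{\mathbf{x}}\|_{\mathscr{Y}}=\langle\mathbf{y}_0,\hat\lambda\rangle_{\mathscr{Y}}$.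 2. If $\|\hat\lambda\|_{\mathscr{Y}^*}<\|\hat\mu\|_{\mathscr{Z}^*}$, then $A\hat{\mathbf{x}}=\mathbf{y}_0$ and $\rho\|B\hat{\mathbf{x}}\|_{\mathscr{Z}}=\langle\mathbf{y}_0,\hat\lambda\rangle_{\mathscr{Y}}$. 3. If $\|\hat\lambda\|_{\mathscr{Y}^*}=\|\hat\mu\|_{\mathscr{Z}^*}$, then one of the following holds: (i) $B\hat{\mathbf{x}}=0$ and $\|\mathbf{y}_0-A\hat{\mathbf{x}}\|_{\mathscr{Y}}=\langle\mathbf{y}_0,\hat\lambda\rangle_{\mathscr{Y}}$; (ii) $A\hat{\mathbf{x}}=\mathbf{y}_0$ and $\rho\|B\hat{\mathbf{x}}\|_{\mathscr{Z}}=\langle\mathbf{y}_0,\hat\lambda\rangle_{\mathscr{Y}}$; (iii) $\mathbf{y}_0-A\hat{\mathbf{x}}\ne0$, $B\hat{\mathbf{x}}\ne0$, $(\mathbf{y}_0-A\hat{\mathbf{x}})/\|\mathbf{y}_0-A\hat{\mathbf{x}}\|_{\mathscr{Y}}$ is norming for $\hat\lambda$ and $-B\hat{\mathbf{x}}/\|B\hat{\mathbf{x}}\|_{\mathscr{Z}}$ is norming for $\hat\mu$.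
   Context: $\langle\mathbf{y},\lambda\rangle_{\mathscr{Y}}:=\lambda(\mathbf{y})$. For $\lambda\in\mathscr{Y}^*$, a vector $\mathbf{y}\in\mathscr{Y}$ is norming for $\lambda$ if $\|\mathbf{y}\|_{\mathscr{Y}}=1$ and $\langle\mathbf{y},\lambda\rangle_{\mathscr{Y}}=\|\lambda\|_{\mathscr{Y}^*}$; similarly for $\mathscr{Z}$. *)

From HB Require Import structures.
From mathcomp Require Import all_boot all_order all_algebra.
From mathcomp Require Import all_classical all_reals all_analysis.
Set Implicit Arguments. Unset Strict Implicit. Unset Printing Implicit Defensive.
Import Order.TTheory GRing.Theory Num.Theory.
Import numFieldNormedType.Exports.
Local Open Scope classical_set_scope.
Local Open Scope ring_scope.

Definition dnorm (R : realType) (V : normedModType R) (l : V -> R) : R :=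
  sup [set `|l v| | v in [set v : V | `|v| <= 1]].

Definition norming (R : realType) (V : normedModType R) (l : V -> R) (y : V) : Prop :=
  `|y| = 1 /\ l y = dnorm l.

Definition primal_val (R : realType) (X Y Z : normedModType R)
  (A : X -> Y) (B : X -> Z) (y0 : Y) (rho : R) : R :=
  inf [set `|y0 - A x| + rho * `|B x| | x in [set: X]].

(* Value of the dual problem
   sup { |<y0, l>| : l in Y^*, m in Z^*, max(||l||,||m||) <= 1, A^* l + rho B^* m = 0 }
   where Y^*, Z^* are continuous linear functionals and (A^* l)(x) = l (A x). *)
Definition dual_val (R : realType) (X Y Z : normedModType R)
  (A : X -> Y) (B : X -> Z) (y0 : Y) (rho : R) : R :=
  sup [set r : R | exists (l : {linear Y -> R^o}) (m : {linear Z -> R^o}),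
        [/\ continuous (l : Y -> R), continuous (m : Z -> R),
            Num.max (dnorm (l : Y -> R)) (dnorm (m : Z -> R)) <= 1,
            (forall x : X, l (A x) + rho * m (B x) = 0) &
            r = `|l y0|]].

From HB Require Import structures.
From mathcomp Require Import all_boot all_order all_algebra.
From mathcomp Require Import all_classical all_reals all_analysis.
From mathcomp Require Import lra.
Set Implicit Arguments. Unset Strict Implicit. Unset Printing Implicit Defensive.
Import Order.TTheory GRing.Theory Num.Theory.
Import numFieldNormedType.Exports.
Local Open Scope classical_set_scope.
Local Open Scope ring_scope.

(* Strong duality comes from Hahn-Banach: the perturbation function
   p(y, z) = inf_x |y - A x| + rho |z - B x| is sublinear on Y * Z, and a linear
   g <= p with g(y0, 0) = p(y0, 0) splits as g(y, z) = l y + rho m z with (l, m)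
   dual feasible, so primal <= dual. Hahn-Banach itself is proved by taking, with
   Zorn's lemma, a minimal sublinear functional below p, which is necessarily
   linear. Given strong duality, the chain
     <y0, lh> = lh (y0 - A xh) + rho mh (- B xh)
              <= |lh| |y0 - A xh| + rho |mh| |B xh|
              <= |y0 - A xh| + rho |B xh| = primal <= dual = <y0, lh>
   consists of equalities, and a dual norm below 1 forces the corresponding
   residual to vanish. *)

Lemma lb_le_infD (R : realType) (S1 S2 : set R) (c : R) :
  S1 !=set0 -> S2 !=set0 ->
  (forall x y, S1 x -> S2 y -> c <= x + y) -> c <= inf S1 + inf S2.
Proof.
move=> S1_n0 S2_n0 le_c.
suff : c - inf S1 <= inf S2 by lra.
apply: lb_le_inf => // y S2y.
suff : c - y <= inf S1 by lra.
by apply: lb_le_inf => // x S1x; have := le_c x y S1x S2y; lra.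
Qed.

Section Sublinear.
Variables (R : realType) (V : lmodType R).
Implicit Types (p q r : V -> R) (u v w : V).

Definition sublinear q := (forall u v, q (u + v) <= q u + q v) /\
  (forall a v, 0 <= a -> q (a *: v) <= a * q v).

Lemma sublinear0 q : sublinear q -> q 0 = 0.
Proof.
move=> [qD qZ]; have := qZ 0 0 (lexx 0); rewrite scale0r mul0r.
by have := qD 0 0; rewrite addr0; lra.
Qed.

Lemma sublinearN q v : sublinear q -> - q (- v) <= q v.
Proof. by move=> qs; have := qs.1 v (- v); rewrite subrr sublinear0 //; lra. Qed.

Lemma sublinearZ q a v : sublinear q -> 0 <= a -> q (a *: v) = a * q v.
Proof.
move=> qs; rewrite le_eqVlt => /predU1P[<-|a_gt0].
  by rewrite scale0r mul0r sublinear0.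
apply/eqP; rewrite eq_le qs.2 ?(ltW a_gt0) //=.
have := qs.2 a^-1 (a *: v); rewrite scalerA mulVf ?gt_eqF // scale1r.
by rewrite -ler_pdivlMl //; apply; rewrite invr_ge0 ltW.
Qed.

Definition sublinear_cut q u v :=
  inf [set q (v + t *: u) - t * q u | t in [set t : R | 0 <= t]].

Section Cut.
Variables (q : V -> R) (u : V) (qs : sublinear q).

Let cut_set v := [set q (v + t *: u) - t * q u | t in [set t : R | 0 <= t]].

Let cut_set_n0 v : cut_set v !=set0.
Proof. by exists (q (v + 0 *: u) - 0 * q u); exists 0 => /=. Qed.

Let cut_set_lb v : has_lbound (cut_set v).
Proof.
exists (- q (- v)) => _ [t /= t_ge0 <-].
have := qs.1 (v + t *: u) (- v).
by rewrite addrAC subrr add0r sublinearZ //; lra.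
Qed.

Lemma sublinear_cut_le_at v t : 0 <= t ->
  sublinear_cut q u v <= q (v + t *: u) - t * q u.
Proof. by move=> t_ge0; apply: (ge_inf (cut_set_lb v)); exists t. Qed.

Lemma sublinear_cut_le v : sublinear_cut q u v <= q v.
Proof.
by have := sublinear_cut_le_at v (lexx 0); rewrite scale0r addr0 mul0r subr0.
Qed.

Lemma sublinear_cutN : sublinear_cut q u (- u) <= - q u.
Proof.
have := sublinear_cut_le_at (- u) ler01.
by rewrite scale1r addNr sublinear0 // mul1r sub0r.
Qed.

Lemma sublinear_cut_sublinear : sublinear (sublinear_cut q u).
Proof.
split=> [v1 v2|a v].
  apply: lb_le_infD; [exact: cut_set_n0..|] => _ _ [t1 /= t1_ge0 <-] [t2 /= t2_ge0 <-].
  have := sublinear_cut_le_at (v1 + v2) (addr_ge0 t1_ge0 t2_ge0).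
  have := qs.1 (v1 + t1 *: u) (v2 + t2 *: u).
  by rewrite addrACA -scalerDl mulrDl; lra.
rewrite le_eqVlt => /predU1P[<-|a_gt0].
  by rewrite scale0r mul0r; have := sublinear_cut_le 0; rewrite (sublinear0 qs).
rewrite -ler_pdivrMl //; apply: lb_le_inf; first exact: cut_set_n0.
move=> _ [t /= t_ge0 <-].
rewrite ler_pdivrMl //.
have := sublinear_cut_le_at (a *: v) (mulr_ge0 (ltW a_gt0) t_ge0).
by rewrite -scalerA -scalerDr (sublinearZ _ qs (ltW a_gt0)) mulrBr mulrA.
Qed.

End Cut.

Lemma minimal_sublinear_linear q : sublinear q ->
  (forall r, sublinear r -> (forall v, r v <= q v) -> forall v, q v <= r v) ->
  forall a u v, q (a *: u + v) = a * q u + q v.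
Proof.
move=> qs qmin.
have qN u : q (- u) = - q u.
  have := qmin _ (sublinear_cut_sublinear u qs) (sublinear_cut_le u qs) (- u).
  have := sublinear_cutN u qs; have := sublinearN (- u) qs; rewrite opprK.
  by move=> *; apply/eqP; rewrite eq_le; apply/andP; split; lra.
have qD u v : q (u + v) = q u + q v.
  apply/eqP; rewrite eq_le qs.1 /=.
  by have := qs.1 (- u) (- v); rewrite -opprD !qN; lra.
move=> a u v; rewrite qD; congr (_ + _).
have [a_ge0|a_lt0] := leP 0 a; first by rewrite sublinearZ.
rewrite -[a *: u]opprK -scaleNr qN sublinearZ ?oppr_ge0 ?ltW //; lra.
Qed.

Lemma chain_inf_sublinear (p : V -> R) (C : set (V -> R)) : C !=set0 ->
  (forall q, C q -> sublinear q /\ forall v, q v <= p v) ->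
  total_on C (fun q r => forall v, r v <= q v) ->
  sublinear (fun v => inf [set q v | q in C]) /\
  forall q, C q -> forall v, inf [set q v | q in C] <= q v.
Proof.
move=> [q0 Cq0] Cs Ctot.
have C_n0 v : [set q v | q in C] !=set0 by exists (q0 v), q0.
have C_lb v : has_lbound [set q v | q in C].
  exists (- p (- v)) => _ [q Cq <-]; have [qs qp] := Cs q Cq.
  by have := sublinearN v qs; have := qp (- v); lra.
have inf_le q : C q -> forall v, inf [set q v | q in C] <= q v.
  by move=> Cq v; apply: (ge_inf (C_lb v)); exists q.
split=> //; split=> [v1 v2|a v].
  apply: lb_le_infD => // _ _ [q1 Cq1 <-] [q2 Cq2 <-].
  have [q21|q12] := Ctot q1 q2 Cq1 Cq2.
  - apply: le_trans (inf_le q2 Cq2 _) _; apply: le_trans ((Cs q2 Cq2).1.1 v1 v2) _.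
    by rewrite lerD2r.
  - apply: le_trans (inf_le q1 Cq1 _) _; apply: le_trans ((Cs q1 Cq1).1.1 v1 v2) _.
    by rewrite lerD2l.
rewrite le_eqVlt => /predU1P[<-|a_gt0].
  rewrite scale0r mul0r; apply: le_trans (inf_le q0 Cq0 _) _.
  by rewrite sublinear0 //; exact: (Cs q0 Cq0).1.
rewrite -ler_pdivrMl //; apply: lb_le_inf => // _ [q Cq <-].
rewrite ler_pdivrMl //; apply: le_trans (inf_le q Cq _) _.
exact: (Cs q Cq).1.2 _ _ (ltW a_gt0).
Qed.

Theorem hahn_banach_sublinear (p : V -> R) (w : V) : sublinear p ->
  exists g : {linear V -> R^o}, (forall v, g v <= p v) /\ g w = p w.
Proof.
move=> ps.
(* The constraint at [- w] is inherited by the minimal element and forces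
   [g w = p w]. *)
pose admissible q := [/\ sublinear q, forall v, q v <= p v & q (- w) <= - p w].
pose T := {q : V -> R | admissible q}.
have cut_adm : admissible (sublinear_cut p w).
  split; [exact: sublinear_cut_sublinear | exact: sublinear_cut_le |].
  exact: sublinear_cutN.
pose below (s t : T) := `[< forall v, sval t v <= sval s v >].
have [|r s t|C Ctot|q qmax] := @ZL_preorder T (exist _ _ cut_adm) below.
- by move=> t; apply/asboolP.
- by move=> /asboolP rs /asboolP st; apply/asboolP => v; exact: le_trans (st v) (rs v).
- have [[t0 Ct0]|C0] := pselect (C !=set0); last first.
    by exists (exist _ _ cut_adm) => t Ct; exfalso; apply: C0; exists t.
  pose D := [set sval t | t in C].
  have Dn0 : D !=set0 by exists (sval t0), t0.
  have Dadm q : D q -> sublinear q /\ forall v, q v <= p v.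
    by move=> [t _ <-]; have [] := svalP t.
  have Dtot : total_on D (fun q r => forall v, r v <= q v).
    move=> _ _ [s Cs <-] [t Ct <-].
    by have [/asboolP|/asboolP] := Ctot s t Cs Ct; [left|right].
  have [infs infle] := chain_inf_sublinear Dn0 Dadm Dtot.
  have [_ t0p t0w] := svalP t0.
  have inf_t0 v : inf [set q v | q in D] <= sval t0 v by apply: infle; exists t0.
  have inf_adm : admissible (fun v => inf [set q v | q in D]).
    split=> // [v|]; first exact: le_trans (inf_t0 v) (t0p v).
    exact: le_trans (inf_t0 _) t0w.
  by exists (exist _ _ inf_adm) => t Ct; apply/asboolP => v; apply: infle; exists t.
case: q qmax => q [qs qp qw] /= qmax.
have qlin : linear_for *:%R (q : V -> R^o).
  apply: minimal_sublinear_linear => // r rs rq v.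
  have radm : admissible r.
    split=> // [v'|]; first exact: le_trans (rq v') (qp v').
    exact: le_trans (rq _) qw.
  have /asboolP := qmax (exist _ _ radm) (asboolT rq); exact.
pose g : {linear V -> R^o} :=
  HB.pack (q : V -> R^o) (GRing.isLinear.Build R V R^o *:%R _ qlin).
exists g; split => //=.
by apply/eqP; rewrite eq_le qp /=; have := sublinearN w qs; lra.
Qed.

End Sublinear.

Section DualNorm.
Variables (R : realType) (V : normedModType R) (l : {linear V -> R^o}).

Let ball_image_n0 : [set `|l v| | v in [set v : V | `|v| <= 1]] !=set0.
Proof. by exists `|l 0|, 0; rewrite //= normr0. Qed.

Lemma dnorm_le (c : R) : 0 <= c -> (forall v, `|l v| <= c * `|v|) ->
  dnorm (l : V -> R) <= c.
Proof.
move=> c_ge0 lc; apply: ge_sup => // _ [v /= v_le1 <-].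
exact: le_trans (lc v) (ler_piMr c_ge0 v_le1).
Qed.

Lemma normr_le_dnorm : continuous (l : V -> R) ->
  forall v, `|l v| <= dnorm (l : V -> R) * `|v|.
Proof.
move=> /linear_bounded_continuous /linear_boundedP /pinfty_ex_gt0 [M M_gt0 lM].
have ball_image_ub : has_ubound [set `|l v| | v in [set v : V | `|v| <= 1]].
  exists M => _ [v /= v_le1 <-].
  exact: le_trans (lM v) (ler_piMr (ltW M_gt0) v_le1).
move=> v; have [->|v_neq0] := eqVneq v 0; first by rewrite linear0 !normr0 mulr0.
have v_gt0 : 0 < `|v| by rewrite normr_gt0.
have -> : `|l v| = `|l (`|v|^-1 *: v)| * `|v|.
  by rewrite linearZ /= normrM normfV normr_id mulrAC mulVf ?mul1r ?gt_eqF.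
rewrite ler_pM2r //.
apply: ub_le_sup => //; exists (`|v|^-1 *: v) => //=.
by rewrite normrZ normfV normr_id mulVf ?gt_eqF.
Qed.

Lemma linear_norm_bound (c : R) : (forall v, l v <= c * `|v|) ->
  forall v, `|l v| <= c * `|v|.
Proof.
move=> lc v; rewrite ler_norml lc andbT lerNl.
by have := lc (- v); rewrite linearN normrN.
Qed.

Lemma norm_bound_continuous (c : R) : (forall v, `|l v| <= c * `|v|) ->
  continuous (l : V -> R).
Proof.
move=> lc; apply: bounded_linear_continuous; apply/linear_boundedP.
near=> r => v; apply: le_trans (lc v) (ler_wpM2r (normr_ge0 v) _).
by near: r; apply: nbhs_pinfty_ge; exact: num_real.
Unshelve. all: by end_near.
Qed.

Lemma dnorm_lt1_eq0 (v : V) : continuous (l : V -> R) ->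
  dnorm (l : V -> R) < 1 -> l v = `|v| -> v = 0.
Proof.
move=> lc l_lt1 lv; apply/eqP; apply: contraTT l_lt1 => v_neq0.
have := normr_le_dnorm lc v.
by rewrite -leNgt lv normr_id -{1}[`|v|]mul1r ler_pM2r ?normr_gt0.
Qed.

Lemma norming_normalize (v : V) : v != 0 -> l v = `|v| -> dnorm (l : V -> R) = 1 ->
  norming (l : V -> R) (`|v|^-1 *: v).
Proof.
move=> v_neq0 lv l1; have nv_neq0 : `|v| != 0 by rewrite normr_eq0.
split; first by rewrite normrZ normfV normr_id mulVf.
by rewrite l1 linearZ /= lv; exact: mulVf.
Qed.

End DualNorm.

Section Duality.
Variables (R : realType) (X Y Z : normedModType R).
Variables (A : {linear X -> Y}) (B : {linear X -> Z}) (rho : R).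
Hypothesis rho_gt0 : 0 < rho.

Definition perturbed_primal_val (v : Y * Z) :=
  inf [set `|v.1 - A x| + rho * `|v.2 - B x| | x in [set: X]].

Lemma perturbed_primal_val_le (v : Y * Z) (x : X) :
  perturbed_primal_val v <= `|v.1 - A x| + rho * `|v.2 - B x|.
Proof.
apply: ge_inf; last by exists x.
exists 0 => _ [x' _ <-].
by rewrite addr_ge0 // mulr_ge0 // ltW.
Qed.

Lemma perturbed_primal_val_sublinear : sublinear perturbed_primal_val.
Proof.
have n0 v : [set `|v.1 - A x| + rho * `|v.2 - B x| | x in [set: X]] !=set0.
  by exists (`|v.1 - A 0| + rho * `|v.2 - B 0|), 0.
split=> [v1 v2|a v].
  apply: lb_le_infD => // _ _ [x1 _ <-] [x2 _ <-].
  apply: le_trans (perturbed_primal_val_le _ (x1 + x2)) _.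
  have -> : (v1 + v2).1 - A (x1 + x2) = (v1.1 - A x1) + (v2.1 - A x2).
    by rewrite !linearD /= addrACA.
  have -> : (v1 + v2).2 - B (x1 + x2) = (v1.2 - B x1) + (v2.2 - B x2).
    by rewrite !linearD /= addrACA.
  have := ler_normD (v1.1 - A x1) (v2.1 - A x2).
  have := ler_wpM2l (ltW rho_gt0) (ler_normD (v1.2 - B x1) (v2.2 - B x2)).
  by rewrite mulrDr; lra.
rewrite le_eqVlt => /predU1P[<-|a_gt0].
  apply: le_trans (perturbed_primal_val_le _ 0) _.
  by rewrite !linear0 /= !scale0r !addr0 !normr0 mulr0 addr0 mul0r.
rewrite -ler_pdivrMl //; apply: lb_le_inf => // _ [x _ <-].
rewrite ler_pdivrMl //; apply: le_trans (perturbed_primal_val_le _ (a *: x)) _.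
rewrite [A _]linearZ [B _]linearZ /= -!scalerBr !normrZ gtr0_norm //.
by rewrite mulrDr mulrCA.
Qed.

Lemma primal_val_perturbed (y0 : Y) :
  primal_val A B y0 rho = perturbed_primal_val (y0, 0).
Proof. by congr inf; apply: eq_imagel => x _ /=; rewrite sub0r normrN. Qed.

Lemma product_functional_le_dual_val (g : {linear (Y * Z)%type -> R^o}) (y0 : Y) :
  (forall v, g v <= `|v.1| + rho * `|v.2|) -> (forall x, g (A x, B x) = 0) ->
  g (y0, 0) <= dual_val A B y0 rho.
Proof.
move=> g_bound g_AB.
have l_lin : linear_for *:%R (fun y : Y => g (y, 0) : R^o).
  move=> a y y'; rewrite -linearP; congr (g _).
  by congr pair; rewrite /= ?scaler0 ?addr0.
have m_lin : linear_for *:%R (fun z : Z => rho^-1 * g (0, z) : R^o).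
  move=> a z z'; rewrite -[a *: (rho^-1 * _)]/(a * (rho^-1 * _)) mulrCA -mulrDr.
  congr (_ * _); rewrite -linearP; congr (g _).
  by congr pair; rewrite /= ?scaler0 ?addr0.
pose l : {linear Y -> R^o} := HB.pack (fun y : Y => g (y, 0) : R^o)
  (GRing.isLinear.Build R Y R^o *:%R _ l_lin).
pose m : {linear Z -> R^o} := HB.pack (fun z : Z => rho^-1 * g (0, z) : R^o)
  (GRing.isLinear.Build R Z R^o *:%R _ m_lin).
have l_norm : forall y, `|l y| <= 1 * `|y|.
  apply: linear_norm_bound => y; rewrite mul1r.
  by apply: le_trans (g_bound _) _; rewrite normr0 mulr0 addr0.
have m_norm : forall z, `|m z| <= 1 * `|z|.
  apply: linear_norm_bound => z; rewrite mul1r /= ler_pdivrMl //.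
  by apply: le_trans (g_bound _) _; rewrite normr0 add0r.
have dual_ub : has_ubound [set r : R |
    exists (l : {linear Y -> R^o}) (m : {linear Z -> R^o}),
      [/\ continuous (l : Y -> R), continuous (m : Z -> R),
          Num.max (dnorm (l : Y -> R)) (dnorm (m : Z -> R)) <= 1,
          (forall x : X, l (A x) + rho * m (B x) = 0) &
          r = `|l y0|]].
  exists `|y0| => _ [l' [m' [l'c _ + _ ->]]]; rewrite ge_max => /andP[l'1 _].
  exact: le_trans (normr_le_dnorm l'c y0) (ler_piMl (normr_ge0 _) l'1).
apply: le_trans (ler_norm (l y0)) _.
apply: (ub_le_sup dual_ub); exists l, m; split=> //.
- exact: norm_bound_continuous l_norm.
- exact: norm_bound_continuous m_norm.
- by rewrite ge_max !dnorm_le.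
- move=> x; rewrite /= mulrA mulfV ?gt_eqF // mul1r -linearD /=.
  by rewrite -(g_AB x); congr (g _); congr pair; rewrite /= ?addr0 ?add0r.
Qed.

Lemma primal_val_le_dual_val (y0 : Y) :
  primal_val A B y0 rho <= dual_val A B y0 rho.
Proof.
have [g [g_le g_y0]] :=
  hahn_banach_sublinear (y0, 0) perturbed_primal_val_sublinear.
rewrite primal_val_perturbed -g_y0; apply: product_functional_le_dual_val => [v|x].
  apply: le_trans (g_le v) _; have := perturbed_primal_val_le v 0.
  by rewrite [A 0]linear0 [B 0]linear0 !subr0.
have g_le0 x' : g (A x', B x') <= 0.
  apply: le_trans (g_le _) _; have := perturbed_primal_val_le (A x', B x') x'.
  by rewrite /= !subrr !normr0 mulr0 addr0.
have := g_le0 (- x); rewrite !linearN -[(- _, - _)]/(- (A x, B x)) linearN.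
by have := g_le0 x; lra.
Qed.

Lemma complementary_slackness (l : {linear Y -> R^o}) (m : {linear Z -> R^o})
    (y0 : Y) (x : X) :
  continuous (l : Y -> R) -> continuous (m : Z -> R) ->
  dnorm (l : Y -> R) <= 1 -> dnorm (m : Z -> R) <= 1 ->
  (forall x, l (A x) + rho * m (B x) = 0) ->
  `|y0 - A x| + rho * `|B x| <= l y0 ->
  [/\ l (y0 - A x) = `|y0 - A x|, m (- B x) = `|B x|
     & l y0 = `|y0 - A x| + rho * `|B x|].
Proof.
move=> lc mc l_le1 m_le1 adj opt.
have l_y0 : l y0 = l (y0 - A x) + rho * m (- B x).
  by rewrite linearB !linearN mulrN /=; have := adj x; lra.
have l_le : l (y0 - A x) <= `|y0 - A x|.
  apply: le_trans (ler_norm _) (le_trans (normr_le_dnorm lc _) _).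
  exact: ler_piMl (normr_ge0 _) l_le1.
have m_le : rho * m (- B x) <= rho * `|B x|.
  rewrite ler_pM2l // -(normrN (B x)); apply: le_trans (ler_norm _) _.
  exact: le_trans (normr_le_dnorm mc _) (ler_piMl (normr_ge0 _) m_le1).
have m_eq : m (- B x) = `|B x| by apply: (mulfI (lt0r_neq0 rho_gt0)); lra.
by split; [lra | exact: m_eq | rewrite -m_eq; lra].
Qed.

End Duality.

Unset Implicit Arguments.
Theorem proposition3p6 (R : realType) (X Y Z : completeNormedModType R)
  (A : {linear X -> Y}) (B : {linear X -> Z})
  (hA : continuous (A : X -> Y)) (hB : continuous (B : X -> Z))
  (y0 : Y) (rho : R) (hrho : 0 < rho)
  (xh : X)
  (hxh : `|y0 - A xh| + rho * `|B xh| = primal_val A B y0 rho)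
  (hpos : 0 < primal_val A B y0 rho)
  (lh : {linear Y -> R^o}) (mh : {linear Z -> R^o})
  (hlc : continuous (lh : Y -> R)) (hmc : continuous (mh : Z -> R))
  (hmax : Num.max (dnorm (lh : Y -> R)) (dnorm (mh : Z -> R)) = 1)
  (hadj : forall x : X, lh (A x) + rho * mh (B x) = 0)
  (hlh : lh y0 = dual_val A B y0 rho)
  (hdpos : 0 < dual_val A B y0 rho) :
  (dnorm (mh : Z -> R) < dnorm (lh : Y -> R) ->
     B xh = 0 /\ `|y0 - A xh| = lh y0) /\
  (dnorm (lh : Y -> R) < dnorm (mh : Z -> R) ->
     A xh = y0 /\ rho * `|B xh| = lh y0) /\
  (dnorm (lh : Y -> R) = dnorm (mh : Z -> R) ->
     [\/ B xh = 0 /\ `|y0 - A xh| = lh y0,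
         A xh = y0 /\ rho * `|B xh| = lh y0 |
         [/\ y0 - A xh <> 0, B xh <> 0,
             norming (lh : Y -> R) (`|y0 - A xh|^-1 *: (y0 - A xh)) &
             norming (mh : Z -> R) (`|B xh|^-1 *: (- B xh))]]).
Proof.
have [l_le1 m_le1] : dnorm (lh : Y -> R) <= 1 /\ dnorm (mh : Z -> R) <= 1.
  by apply/andP; rewrite -ge_max hmax.
have opt : `|y0 - A xh| + rho * `|B xh| <= lh y0.
  by rewrite hxh hlh; exact: primal_val_le_dual_val.
have [l_res m_B l_y0] := complementary_slackness hrho hlc hmc l_le1 m_le1 hadj opt.
have res0 : dnorm (lh : Y -> R) < 1 -> A xh = y0.
  by move=> /(dnorm_lt1_eq0 hlc)/(_ l_res)/subr0_eq/esym.
have B0 : dnorm (mh : Z -> R) < 1 -> B xh = 0.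
  move=> m_lt1; apply/eqP.
  by rewrite -oppr_eq0 (dnorm_lt1_eq0 (v := - B xh) hmc m_lt1) ?normrN.
have caseI : B xh = 0 -> B xh = 0 /\ `|y0 - A xh| = lh y0.
  by move=> Bxh0; split=> //; rewrite l_y0 Bxh0 normr0 mulr0 addr0.
have caseII : A xh = y0 -> A xh = y0 /\ rho * `|B xh| = lh y0.
  by move=> Axh; split=> //; rewrite l_y0 Axh subrr normr0 add0r.
split; [|split] => [lt_ml|lt_lm|eq_lm].
- by apply/caseI/B0; move: hmax; rewrite max_l ?ltW // => <-.
- by apply/caseII/res0; move: hmax; rewrite max_r ?ltW // => <-.
have [l1 m1] : dnorm (lh : Y -> R) = 1 /\ dnorm (mh : Z -> R) = 1.
  by move: hmax; rewrite -eq_lm maxxx.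
have [Bxh0|B_neq0] := eqVneq (B xh) 0; first by apply/Or31/caseI.
have [Axh|Axh_neq] := eqVneq (A xh) y0; first by apply/Or32/caseII.
have res_neq0 : y0 - A xh != 0 by rewrite subr_eq0 eq_sym.
apply: Or33; split; [exact/eqP | exact/eqP | exact: norming_normalize |].
by rewrite -(normrN (B xh)); apply: norming_normalize; rewrite ?oppr_eq0 ?normrN.
Qed.
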